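(* Let $A,B\in\mathcal A_n$. Then $A\le B$ in ASM order if and only if there is a directed path from $A$ to $B$ in the ASM graph $(\mathcal A_n,\to)$.
   Context: An $n\times n$ matrix $A=(a_{ij})$ is an alternating sign matrix (ASM) if all $a_{ij}\in\{-1,0,1\}$, all partial row sums $\sum_{k\le j}a_{ik}$ and partial column sums $\sum_{k\le i}a_{kj}$ lie in $\{0,1\}$, and every full row sum and column sum equals $1$; $\mathcal A_n$ is the set of $n\times n$ ASMs. The corner sum matrix is $\widetilde A(i,j)=\sum_{p\le i,q\le j}a_{pq}$, with $\widetilde A(i,j)=0$ if $i=0$ or $j=0$. ASM order: $A\le B$ iff $\widetilde A(i,j)\ge\widetilde B(i,j)$ for all $i,j\in[n]$. For $i<j$, $k<l$ in $[n]$, $R_{ij}^{kl}=\{(p,q): i\le p<j,\ k\le q<l\}$ and $\widetilde R_{ij}^{kl}$ is the $0/1$ indicator matrix of $R_{ij}^{kl}$. $E(A)$ (essential rectangles): those $R_{ij}^{kl}$ with, for all $(p,q)\in R_{ij}^{kl}$, $\widetilde A(p,k)=\widetilde A(p,k-1)$, $\widetilde A(p,l)=\widetilde A(p,l-1)+1$, $\widetilde A(i,q)=\widetilde A(i-1,q)$, $\widetilde A(j,q)=\widetilde A(j-1,q)+1$. $E^*(A)$ (dual essential rectangles): those with $\widetilde A(p,k)=\widetilde A(p,k-1)+1$, $\widetilde A(p,l)=\widetilde A(p,l-1)$, $\widetilde A(i,q)=\widetilde A(i-1,q)+1$, $\widetilde A(j,q)=\widetilde A(j-1,q)$. The operator $r_{ij}^{kl}$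 sends $A$ to the ASM with corner sum matrix $\widetilde A+\widetilde R_{ij}^{kl}$ if $R_{ij}^{kl}\in E(A)$, $\widetilde A-\widetilde R_{ij}^{kl}$ if $R_{ij}^{kl}\in E^*(A)$, $\widetilde A$ otherwise. The bigrassmannian statistic is $\beta(A)=\sum_{i,j=1}^n\min(i,j)-\sum_{i,j=1}^n\widetilde A(i,j)$. ASM graph: directed edge $A\to B$ (labelled $(i,j,k,l)$, written $A\xrightarrow{ij,kl}B$) if $B=r_{ij}^{kl}(A)$ and $\beta(A)<\beta(B)$. *)

From HB Require Import structures.
From mathcomp Require Import all_boot all_order all_algebra.
From Stdlib Require Export Relations.Relation_Operators.
Set Implicit Arguments. Unset Strict Implicit. Unset Printing Implicit Defensive.
Import Order.TTheory GRing.Theory Num.Theory.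
Local Open Scope ring_scope.

(* Matrices are 'M[int]_n with 0-based entries A p q (p q : 'I_n);
   the paper's entry a_{p+1,q+1} is A p q. *)

Definition is_asm (n : nat) (A : 'M[int]_n) : Prop :=
  (forall i j : 'I_n, A i j = -1 \/ A i j = 0 \/ A i j = 1) /\
  (forall (i j : 'I_n),
      let s := \sum_(q < n | (q <= j)%N) A i q in s = 0 \/ s = 1) /\
  (forall (i j : 'I_n),
      let s := \sum_(p < n | (p <= i)%N) A p j in s = 0 \/ s = 1) /\
  (forall i : 'I_n, \sum_(q < n) A i q = 1) /\
  (forall j : 'I_n, \sum_(p < n) A p j = 1).

(* Corner sum matrix with the paper's 1-based indexing:
   csum A i j = sum_{p <= i, q <= j} a_{pq}; it is 0 when i = 0 or j = 0. *)
Definition csum (n : nat) (A : 'M[int]_n) (i j : nat) : int :=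
  \sum_(p < n | (p < i)%N) \sum_(q < n | (q < j)%N) A p q.

Definition asm_le (n : nat) (A B : 'M[int]_n) : Prop :=
  forall i j : nat, (1 <= i <= n)%N -> (1 <= j <= n)%N -> csum B i j <= csum A i j.

Definition inR (i j k l p q : nat) : bool := (i <= p < j)%N && (k <= q < l)%N.

Definition essentialb (n : nat) (A : 'M[int]_n) (i j k l : nat) : bool :=
  all (fun p => all (fun q =>
        [&& csum A p k == csum A p k.-1,
            csum A p l == csum A p l.-1 + 1,
            csum A i q == csum A i.-1 q &
            csum A j q == csum A j.-1 q + 1]) (iota k (l - k))) (iota i (j - i)).

Definition dual_essentialb (n : nat) (A : 'M[int]_n) (i j k l : nat) : bool :=
  all (fun p => all (fun q =>
        [&& csum A p k == csum A p k.-1 + 1,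
            csum A p l == csum A p l.-1,
            csum A i q == csum A i.-1 q + 1 &
            csum A j q == csum A j.-1 q]) (iota k (l - k))) (iota i (j - i)).

(* The matrix whose corner sum matrix is C (C given with paper indexing,
   C 0 _ = C _ 0 = 0). *)
Definition of_csum (n : nat) (C : nat -> nat -> int) : 'M[int]_n :=
  \matrix_(p < n, q < n) (C p.+1 q.+1 - C p q.+1 - C p.+1 q + C p q).

Definition r_op (n : nat) (i j k l : nat) (A : 'M[int]_n) : 'M[int]_n :=
  if essentialb A i j k l then
    of_csum n (fun p q => csum A p q + (if inR i j k l p q then 1 else 0))
  else if dual_essentialb A i j k l then
    of_csum n (fun p q => csum A p q - (if inR i j k l p q then 1 else 0))
  else A.

Definition beta (n : nat) (A : 'M[int]_n) : int :=
  (\sum_(1 <= i < n.+1) \sum_(1 <= j < n.+1) (minn i j)%:Z)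
  - \sum_(1 <= i < n.+1) \sum_(1 <= j < n.+1) csum A i j.

Definition asm_edge (n : nat) (A B : 'M[int]_n) : Prop :=
  is_asm A /\ is_asm B /\
  exists i j k l : nat,
    [&& (1 <= i)%N, (i < j)%N, (j <= n)%N, (1 <= k)%N, (k < l)%N & (l <= n)%N] /\
    B = r_op i j k l A /\ beta A < beta B.

From HB Require Import structures.
From mathcomp Require Import all_boot all_order all_algebra.
From Stdlib Require Import Relations.Relation_Operators.
From mathcomp Require Import zify.
Set Implicit Arguments. Unset Strict Implicit. Unset Printing Implicit Defensive.
Import Order.TTheory GRing.Theory Num.Theory.
Local Open Scope ring_scope.

(* An ASM is determined by its corner sum matrix, and the corner sum matrices
   of n x n ASMs are exactly the functions C on the grid [0,n]^2 that vanish on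
   the axes, grow by 0 or 1 along rows and columns, and end with C n q = q and
   C p n = p (csum_shape).  In these terms r_{ij}^{kl} adds or subtracts the
   indicator of a rectangle, and beta A is a constant minus the total of the
   corner sums (csum_total).
   (<-) An edge must raise beta; an essential rectangle would raise the corner
   sums and lower beta, so every edge lowers corner sums: A <= r(A).
   (->) If A <= B and A <> B, pick a grid point maximising the defect
   csum A - csum B, ties broken by maximising 2 csum A - p - q.  Maximality
   forces the four dual-essential equations of the unit cell at that point;
   lowering the cell gives an ASM A' with A -> A', A' <= B, and total one less.
   Induction on the gap of totals between A and B yields the path. *)

Lemma prefix_sumS n (F : 'I_n -> int) (j : 'I_n) :
  \sum_(q < n | (q < j.+1)%N) F q = \sum_(q < n | (q < j)%N) F q + F j.
Proof.
rewrite (bigD1 j) //= addrC; congr (_ + _).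
apply: eq_bigl => q; rewrite -(inj_eq val_inj) /=.
by case: (ltngtP q j) => h; lia.
Qed.

Lemma grid_argmax (m : nat) (P : nat -> nat -> bool) (F : nat -> nat -> int) p0 q0 :
  (p0 <= m)%N -> (q0 <= m)%N -> P p0 q0 ->
  exists p q, [/\ (p <= m)%N, (q <= m)%N, P p q &
    forall p' q', (p' <= m)%N -> (q' <= m)%N -> P p' q' -> F p' q' <= F p q].
Proof.
move=> hp0 hq0 P0.
have [[p q] /= Ppq Fmax] := @arg_maxP _ int _ (@Ordinal m.+1 p0 hp0, @Ordinal m.+1 q0 hq0)
  (fun x => P x.1 x.2) (fun x => F x.1 x.2) P0.
exists p, q; split => //; [exact: ltn_ord p | exact: ltn_ord q |].
by move=> p' q' hp' hq' /(Fmax (@Ordinal m.+1 p' hp', @Ordinal m.+1 q' hq')).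
Qed.

Section CornerSums.
Variable n : nat.
Implicit Types (A B : 'M[int]_n) (C : nat -> nat -> int).

Lemma csum0l A q : csum A 0 q = 0.
Proof. by rewrite /csum big_pred0 // => p; rewrite ltn0. Qed.

Lemma csum0r A p : csum A p 0 = 0.
Proof. by rewrite /csum big1 // => i _; rewrite big_pred0 // => q; rewrite ltn0. Qed.

Lemma row_prefix_csum A (i : 'I_n) m :
  \sum_(q < n | (q < m)%N) A i q = csum A i.+1 m - csum A i m.
Proof. by rewrite /csum prefix_sumS addrC addKr. Qed.

Lemma col_prefix_csum A (j : 'I_n) m :
  \sum_(p < n | (p < m)%N) A p j = csum A m j.+1 - csum A m j.
Proof.
rewrite /csum -sumrB; apply: eq_bigr => p _.
by rewrite prefix_sumS addrC addKr.
Qed.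

Lemma entry_csum A (i j : 'I_n) :
  A i j = csum A i.+1 j.+1 - csum A i j.+1 - csum A i.+1 j + csum A i j.
Proof.
have := row_prefix_csum A i j.+1; rewrite prefix_sumS row_prefix_csum.
set x := csum A i.+1 j.+1; set y := csum A i j.+1; set z := csum A i.+1 j.
move=> e; lia.
Qed.

Lemma of_csumK A : of_csum n (csum A) = A.
Proof. by apply/matrixP => i j; rewrite mxE [RHS]entry_csum. Qed.

Lemma csum_inj A B :
  (forall p q, (p <= n)%N -> (q <= n)%N -> csum A p q = csum B p q) -> A = B.
Proof.
move=> eqAB; rewrite -(of_csumK A) -(of_csumK B); apply/matrixP => i j.
by rewrite !mxE !eqAB // ?(ltnW (ltn_ord i)) ?(ltnW (ltn_ord j)).
Qed.

Lemma csum_of_csum C : (forall q, C 0%N q = 0) -> (forall p, C p 0%N = 0) ->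
  forall p q, (p <= n)%N -> (q <= n)%N -> csum (of_csum n C) p q = C p q.
Proof.
move=> C0l C0r p; elim: p => [|p IHp] q hp hq; first by rewrite csum0l C0l.
elim: q hq => [|q IHq] hq; first by rewrite csum0r C0r.
have := entry_csum (of_csum n C) (Ordinal hp) (Ordinal hq); rewrite /= mxE.
move=> e; rewrite /= IHp ?IHq ?IHp ?(ltnW hp) ?(ltnW hq) // in e; lia.
Qed.

Record csum_shape C : Prop := CsumShape {
  shape_top : forall q, C 0%N q = 0;
  shape_left : forall p, C p 0%N = 0;
  shape_right : forall p q, (p <= n)%N -> (q < n)%N ->
    C p q.+1 = C p q \/ C p q.+1 = C p q + 1;
  shape_down : forall p q, (p < n)%N -> (q <= n)%N ->
    C p.+1 q = C p q \/ C p.+1 q = C p q + 1;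
  shape_bottom : forall q, (q <= n)%N -> C n q = q%:Z;
  shape_rightmost : forall p, (p <= n)%N -> C p n = p%:Z }.

Lemma asm_row_prefix A : is_asm A -> forall (i : 'I_n) m, (m <= n)%N ->
  \sum_(q < n | (q < m)%N) A i q = 0 \/ \sum_(q < n | (q < m)%N) A i q = 1.
Proof.
case=> _ [rowP _] i [|j] hj; last exact: (rowP i (Ordinal hj)).
by left; rewrite big_pred0.
Qed.

Lemma asm_col_prefix A : is_asm A -> forall (j : 'I_n) m, (m <= n)%N ->
  \sum_(p < n | (p < m)%N) A p j = 0 \/ \sum_(p < n | (p < m)%N) A p j = 1.
Proof.
case=> _ [_ [colP _]] j [|i] hi; last exact: (colP (Ordinal hi) j).
by left; rewrite big_pred0.
Qed.

(* Prefix sums in {0,1} are unit steps of csum; full sums 1 fix the borders. *)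
Lemma asm_csum_shape A : is_asm A -> csum_shape (csum A).
Proof.
move=> hA; have [_ [_ [_ [rowT colT]]]] := hA.
split; [exact: csum0l | exact: csum0r | | | |].
- move=> p q hp hq; have := asm_col_prefix hA (Ordinal hq) hp.
  rewrite col_prefix_csum /=; lia.
- move=> p q hp hq; have := asm_row_prefix hA (Ordinal hp) hq.
  rewrite row_prefix_csum /=; lia.
- elim=> [|q IH] hq; first by rewrite csum0r.
  have := col_prefix_csum A (Ordinal hq) n.
  rewrite (eq_bigl xpredT) ?colT => [/= e|i]; last by rewrite ltn_ord.
  by rewrite IH ?(ltnW hq) // in e; lia.
- elim=> [|p IH] hp; first by rewrite csum0l.
  have := row_prefix_csum A (Ordinal hp) n.
  rewrite (eq_bigl xpredT) ?rowT => [/= e|i]; last by rewrite ltn_ord.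
  by rewrite IH ?(ltnW hp) // in e; lia.
Qed.

Lemma csum_shape_asm A : csum_shape (csum A) -> is_asm A.
Proof.
case=> _ _ right down bottom rightmost.
have full_sum (F : 'I_n -> int) : \sum_(q < n | (q < n)%N) F q = \sum_(q < n) F q.
  by apply: eq_bigl => q; rewrite ltn_ord.
split; [|split; [|split; [|split]]].
- move=> i j; rewrite entry_csum.
  have := right i.+1 j (ltn_ord i) (ltn_ord j).
  have := right i j (ltnW (ltn_ord i)) (ltn_ord j); lia.
- move=> i j /=; rewrite (row_prefix_csum A i j.+1).
  have := down i j.+1 (ltn_ord i) (ltn_ord j); lia.
- move=> i j /=; rewrite (col_prefix_csum A j i.+1).
  have := right i.+1 j (ltn_ord i) (ltn_ord j); lia.
- move=> i; rewrite -full_sum row_prefix_csum !rightmost ?(ltnW (ltn_ord i)) //; lia.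
- move=> j; rewrite -full_sum col_prefix_csum !bottom ?(ltnW (ltn_ord j)) //; lia.
Qed.

Lemma of_csum_asm C : csum_shape C -> is_asm (of_csum n C).
Proof.
case=> top left right down bottom rightmost; apply: csum_shape_asm.
have cs := csum_of_csum top left.
split; [exact: csum0l | exact: csum0r | | | |].
- by move=> p q hp hq; rewrite !cs ?(ltnW hq) //; exact: right.
- by move=> p q hp hq; rewrite !cs ?(ltnW hp) //; exact: down.
- by move=> q hq; rewrite cs //; exact: bottom.
- by move=> p hp; rewrite cs //; exact: rightmost.
Qed.
End CornerSums.

Section AsmGraph.
Variable n : nat.
Implicit Types A B : 'M[int]_n.

(* The total of the corner sum matrix over [1,n]^2: beta A is a constant minus
   this total, so moving up in the graph means lowering corner sums. *)
Definition csum_total A : int :=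
  \sum_(1 <= i < n.+1) \sum_(1 <= j < n.+1) csum A i j.

Lemma beta_total A :
  beta A = \sum_(1 <= i < n.+1) \sum_(1 <= j < n.+1) (minn i j)%:Z - csum_total A.
Proof. by []. Qed.

Lemma csum_total_le A B :
  (forall i j, (1 <= i <= n)%N -> (1 <= j <= n)%N -> csum B i j <= csum A i j) ->
  csum_total B <= csum_total A.
Proof.
move=> le_csum; apply: ler_sum_nat => i hi; apply: ler_sum_nat => j hj.
by apply: le_csum; lia.
Qed.

Lemma asm_le_grid A B : asm_le A B ->
  forall p q, (p <= n)%N -> (q <= n)%N -> csum B p q <= csum A p q.
Proof. by move=> le [|p] [|q] hp hq; rewrite ?csum0l ?csum0r //; apply: le. Qed.

Definition rect_ind (i j k l p q : nat) : int := if inR i j k l p q then 1 else 0.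

Lemma rect_ind_cell i k p q :
  rect_ind i i.+1 k k.+1 p q = if (p == i) && (q == k) then 1 else 0.
Proof. by rewrite /rect_ind /inR !ltnS -!eqn_leq (eq_sym i) (eq_sym k). Qed.

Lemma csum_shift A (f : nat -> nat -> int) :
  (forall q, f 0%N q = 0) -> (forall p, f p 0%N = 0) ->
  forall p q, (p <= n)%N -> (q <= n)%N ->
  csum (of_csum n (fun p q => csum A p q + f p q)) p q = csum A p q + f p q.
Proof.
by move=> f0l f0r; apply: csum_of_csum => x; rewrite ?csum0l ?csum0r ?f0l ?f0r addr0.
Qed.

Lemma r_op_monotone A i j k l : (1 <= i)%N -> (1 <= k)%N ->
  (forall p q, (p <= n)%N -> (q <= n)%N -> csum A p q <= csum (r_op i j k l A) p q) \/
  (forall p q, (p <= n)%N -> (q <= n)%N -> csum (r_op i j k l A) p q <= csum A p q).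
Proof.
move=> hi hk.
have rect0l q : rect_ind i j k l 0 q = 0.
  by rewrite /rect_ind /inR; case: i hi.
have rect0r p : rect_ind i j k l p 0 = 0.
  by rewrite /rect_ind /inR [(k <= 0)%N]leqNgt hk andbF.
have rect01 p q : 0 <= rect_ind i j k l p q <= 1 by rewrite /rect_ind; case: inR.
rewrite /r_op; case: essentialb; [left | case: dual_essentialb; [right | by left]].
- move=> p q hp hq; rewrite (@csum_shift A (rect_ind i j k l)) //.
  by have := rect01 p q; lia.
- move=> p q hp hq; rewrite (@csum_shift A (fun p q => - rect_ind i j k l p q)) //.
  + by have := rect01 p q; lia.
  + by move=> q'; rewrite rect0l oppr0.
  + by move=> p'; rewrite rect0r oppr0.
Qed.

(* Forward direction: an edge can only come from a dual essential rectangle,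
   since raising corner sums would not increase beta. *)
Lemma edge_asm_le A B : asm_edge A B -> asm_le A B.
Proof.
case=> _ [_ [i [j [k [l [hijkl [-> lt_beta]]]]]]].
have [hi hk] : (1 <= i)%N /\ (1 <= k)%N by lia.
case: (r_op_monotone A j l hi hk) => [raise | lower]; last first.
  by move=> p q /andP[_ hp] /andP[_ hq]; exact: lower.
have : csum_total A <= csum_total (r_op i j k l A).
  by apply: csum_total_le => p q /andP[_ hp] /andP[_ hq]; exact: raise.
by move: lt_beta; rewrite !beta_total; lia.
Qed.

Lemma path_asm_le A B : clos_refl_trans _ (@asm_edge n) A B -> asm_le A B.
Proof.
elim=> [x y /edge_asm_le // | x | x y z _ le_xy _ le_yz] p q hp hq //.
exact: le_trans (le_yz p q hp hq) (le_xy p q hp hq).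
Qed.

(* The 1 x 1 rectangle {(a+1, b+1)} is dual essential exactly when these four
   equations hold; the corresponding r_op lowers a single corner sum. *)
Section LowerUnitCell.
Variables (A : 'M[int]_n) (a b : nat).
Hypotheses (hA : is_asm A) (ha : (a.+1 < n)%N) (hb : (b.+1 < n)%N).
Hypotheses (step_left : csum A a.+1 b.+1 = csum A a.+1 b + 1)
  (flat_right : csum A a.+1 b.+2 = csum A a.+1 b.+1)
  (step_up : csum A a.+1 b.+1 = csum A a b.+1 + 1)
  (flat_down : csum A a.+2 b.+1 = csum A a.+1 b.+1).

Let lowered := r_op a.+1 a.+2 b.+1 b.+2 A.
Let lowered_csum_fun (x y : nat) : int := csum A x y - rect_ind a.+1 a.+2 b.+1 b.+2 x y.

Lemma lowered_of_csum : lowered = of_csum n lowered_csum_fun.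
Proof.
rewrite /lowered /r_op.
have -> : essentialb A a.+1 a.+2 b.+1 b.+2 = false.
  rewrite /essentialb !subSnn /=; apply/negbTE/negP.
  by move=> /andP[/andP[/and4P[/eqP e _ _ _] _] _]; lia.
have -> // : dual_essentialb A a.+1 a.+2 b.+1 b.+2.
rewrite /dual_essentialb !subSnn /= !andbT.
by apply/and4P; split; apply/eqP.
Qed.

Lemma lowered_csum x y : (x <= n)%N -> (y <= n)%N ->
  csum lowered x y = csum A x y - rect_ind a.+1 a.+2 b.+1 b.+2 x y.
Proof.
rewrite lowered_of_csum; apply: (@csum_shift A (fun x y => - _)) => [q|p].
  by rewrite rect_ind_cell oppr0.
by rewrite rect_ind_cell andbF oppr0.
Qed.

(* The four equations are exactly what keeps the unit steps of csum A intact. *)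
Lemma lowered_shape : csum_shape n lowered_csum_fun.
Proof.
have [top left right down bottom rightmost] := asm_csum_shape hA.
rewrite /lowered_csum_fun.
split=> [q|p|p q hp hq|p q hp hq|q hq|p hp]; rewrite ?rect_ind_cell.
- by rewrite top.
- by rewrite left andbF.
- have := right p q hp hq.
  by case: ifP => [/andP[/eqP ? /eqP [?]]|_]; case: ifP => [/andP[/eqP ? /eqP ?]|_];
    subst; lia.
- have := down p q hp hq.
  by case: ifP => [/andP[/eqP [?] /eqP ?]|_]; case: ifP => [/andP[/eqP ? /eqP ?]|_];
    subst; lia.
- by rewrite bottom //; case: ifP => [/andP[/eqP ? _]|_]; lia.
- by rewrite rightmost //; case: ifP => [/andP[_ /eqP ?]|_]; lia.
Qed.

Lemma lowered_asm : is_asm lowered.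
Proof. by rewrite lowered_of_csum; exact: of_csum_asm lowered_shape. Qed.

Lemma lowered_total : csum_total lowered = csum_total A - 1.
Proof.
have cell_sum : \sum_(1 <= x < n.+1) \sum_(1 <= y < n.+1)
    rect_ind a.+1 a.+2 b.+1 b.+2 x y = 1.
  rewrite (eq_big_nat _ _ (F2 := fun x => if x == a.+1 then 1 else 0)).
    by rewrite -big_mkcond big_nat1_eq; case: ifP => //; lia.
  move=> x _; under eq_bigr => y _ do rewrite rect_ind_cell.
  case: (x == a.+1) => /=; last by rewrite big1.
  by rewrite -big_mkcond big_nat1_eq; case: ifP => //; lia.
rewrite /csum_total -cell_sum -sumrB; apply: eq_big_nat => x hx.
by rewrite -sumrB; apply: eq_big_nat => y hy; rewrite lowered_csum //; lia.
Qed.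

End LowerUnitCell.

Section MaximalDefect.
Variables A B : 'M[int]_n.
Hypotheses (hA : is_asm A) (hB : is_asm B) (hAB : asm_le A B) (neqAB : A != B).

Let defect (p q : nat) : int := csum A p q - csum B p q.
Let tiebreak (p q : nat) : int := 2 * csum A p q - p%:Z - q%:Z.

Lemma lex_max_defect : exists p q, [/\ (p <= n)%N, (q <= n)%N,
  forall p' q', (p' <= n)%N -> (q' <= n)%N -> defect p' q' <= defect p q &
  forall p' q', (p' <= n)%N -> (q' <= n)%N ->
    defect p q <= defect p' q' -> tiebreak p' q' <= tiebreak p q].
Proof.
have [p1 [q1 [hp1 hq1 _ max1]]] :=
  @grid_argmax n (fun _ _ => true) defect 0 0 (leq0n n) (leq0n n) isT.
have [p [q [hp hq /eqP eq1 max2]]] :=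
  @grid_argmax n (fun p q => defect p q == defect p1 q1) tiebreak p1 q1 hp1 hq1 (eqxx _).
exists p, q; split=> // [p' q' hp' hq'|p' q' hp' hq' le_d]; first by rewrite eq1 max1.
by apply: max2 => //; rewrite eq_le max1 // -eq1 le_d.
Qed.

(* The lexicographic maximiser is an interior cell of positive defect that
   is dual essential: if an equation failed, a neighbour would have at least
   the same defect and a strictly larger tiebreak. *)
Lemma lowerable_cell : exists a b, [/\ (a.+1 < n)%N, (b.+1 < n)%N,
  csum B a.+1 b.+1 < csum A a.+1 b.+1 &
  [/\ csum A a.+1 b.+1 = csum A a.+1 b + 1, csum A a.+1 b.+2 = csum A a.+1 b.+1,
      csum A a.+1 b.+1 = csum A a b.+1 + 1 & csum A a.+2 b.+1 = csum A a.+1 b.+1]].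
Proof.
have [p [q [hp hq dmax tmax]]] := lex_max_defect.
have [_ _ rightA downA bottomA lastA] := asm_csum_shape hA.
have [_ _ rightB downB bottomB lastB] := asm_csum_shape hB.
have defect_ge0 p' q' : (p' <= n)%N -> (q' <= n)%N -> 0 <= defect p' q'.
  by move=> hp' hq'; rewrite subr_ge0 asm_le_grid.
have pos : 0 < defect p q.
  rewrite lt_def defect_ge0 // andbT; apply: contra neqAB => /eqP d0.
  apply/eqP/csum_inj => p' q' hp' hq'.
  by have := dmax p' q' hp' hq'; have := defect_ge0 p' q' hp' hq'; rewrite d0 /defect; lia.
case: p hp dmax tmax pos => [|a] hp dmax tmax; first by rewrite /defect !csum0l.
case: q hq dmax tmax => [|b] hq dmax tmax; first by rewrite /defect !csum0r.
move=> pos; rewrite /defect in pos; rewrite /defect /tiebreak in tmax.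
have ha : (a.+1 < n)%N.
  by rewrite ltn_neqAle hp andbT; apply/eqP => e; move: pos; rewrite e bottomA ?bottomB // subrr.
have hb : (b.+1 < n)%N.
  by rewrite ltn_neqAle hq andbT; apply/eqP => e; move: pos; rewrite e lastA ?lastB // subrr.
exists a, b; split=> //; first lia; split.
- case: (rightA a.+1 b hp (ltnW hb)) => // flat.
  have := rightB a.+1 b hp (ltnW hb); have := tmax a.+1 b hp (ltnW hq); lia.
- case: (rightA a.+1 b.+1 hp hb) => // raised.
  have := rightB a.+1 b.+1 hp hb; have := tmax a.+1 b.+2 hp hb; lia.
- case: (downA a b.+1 (ltnW ha) hq) => // flat.
  have := downB a b.+1 (ltnW ha) hq; have := tmax a b.+1 (ltnW hp) hq; lia.
- case: (downA a.+1 b.+1 ha hq) => // raised.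
  have := downB a.+1 b.+1 ha hq; have := tmax a.+2 b.+1 ha hq; lia.
Qed.

Lemma covering_step : exists A', [/\ asm_edge A A', asm_le A' B &
  csum_total A' = csum_total A - 1].
Proof.
have [a [b [ha hb ltBA [step_left flat_right step_up flat_down]]]] := lowerable_cell.
have total := lowered_total ha hb step_left flat_right step_up flat_down.
exists (r_op a.+1 a.+2 b.+1 b.+2 A); split=> //.
- split=> //; split; first exact: lowered_asm.
  exists a.+1, a.+2, b.+1, b.+2; split; first lia.
  by split=> //; rewrite !beta_total total; lia.
- move=> x y /andP[_ hx] /andP[_ hy].
  rewrite lowered_csum // rect_ind_cell.
  case: ifP => [/andP[/eqP -> /eqP ->]|_]; first lia.
  by rewrite subr0 asm_le_grid.
Qed.

End MaximalDefect.

Lemma asm_le_path B : is_asm B -> forall (N : nat) A, is_asm A -> asm_le A B ->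
  csum_total A - csum_total B < N%:Z -> clos_refl_trans _ (@asm_edge n) A B.
Proof.
move=> hB; elim=> [|N IH] A hA hAB gap; first by have := csum_total_le hAB; lia.
have [-> | neqAB] := eqVneq A B; first exact: rt_refl.
have [A' [edge hA'B total]] := covering_step hA hB hAB neqAB.
apply: rt_trans (rt_step _ _ _ _ edge) (IH A' _ hA'B _); first by case: edge => _ [].
by rewrite total; lia.
Qed.

End AsmGraph.

Theorem mainTheorem3 (n : nat) (A B : 'M[int]_n) :
  is_asm A -> is_asm B ->
  (asm_le A B <-> clos_refl_trans 'M[int]_n (@asm_edge n) A B).
Proof.
move=> hA hB; split; last exact: path_asm_le.
move=> hAB; apply: (asm_le_path (N := `|csum_total A - csum_total B|.+1) hB hA hAB).
by have := csum_total_le hAB; lia.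
Qed.
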